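(* Let $\mathcal{M}$ be the family of $3$-graphs defined in the context. A $3$-graph $\mathcal{H}$ is $\mathcal{M}$-free if and only if it is $\mathcal{M}$-hom-free.
   Context: A $3$-graph is a $3$-uniform hypergraph; $\mathcal{F}$-free means containing no member of $\mathcal{F}$ as a subgraph; ''contained in'' means isomorphic to a subgraph of. A map $f:V(F)\to V(\mathcal{H})$ is a homomorphism if $f(E)\in\mathcal{H}$ for every $E\in F$ (in particular $f$ is injective on each edge). $\mathcal{H}$ is $F$-hom-free if there is no homomorphism from $F$ to $\mathcal{H}$, and $\mathcal{F}$-hom-free if it is $F$-hom-free for all $F\in\mathcal{F}$. Transversal number $\tau(\mathcal{H})$: minimum size of a vertex set meeting every edge ($0$ if no edges). For $\ell\ge3$, $\mathcal{K}^3_{\ell+1}$: all $3$-graphs $F$ on at most $(\ell+1)+\binom{\ell+1}{2}$ vertices having an $(\ell+1)$-set $S$ (a core) every pair of which lies in an edge of $F$. Blowup of a $3$-graph $\mathcal{T}$ on $[s]$: replace vertex $i$ by a set of size $t_i\ge1$ (pairwise disjoint), each edge by the complete $3$-partite $3$-graph on the corresponding sets. $\mathcal{G}^1_n$: disjoint $A,B$, $|A|=\lfloor n/3\rfloor$, $|B|=\lceil 2n/3\rceil$, edges $\{a,b,b'\}$ with $a\in A$, $\{b,b'\}\subseteq B$. $\mathcal{G}^2_6$: all triples of $[6]$ except $\{1,2,3\},\{1,2,6\},\{3,4,5\},\{4,5,6\}$; for $n>6$, $\mathcal{G}^2_n$ is a blowup of $\mathcal{G}^2_6$ on $n$ vertices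 with maximum number of edges. $\mathcal{M}=M_1\cup M_2\cup M_3$ with $M_1=\{K_5^{3-}\}$ (complete $3$-graph on $5$ vertices minus an edge), $M_2$ = all $F\in\mathcal{K}^3_7$ with a core $S$ such that $\tau(F[S])\ge2$, $M_3$ = all $F\in\mathcal{K}^3_6$ not contained in $\mathcal{G}^1_n$ for any $n\ge1$ and not contained in $\mathcal{G}^2_n$ for any $n\ge6$. *)

From mathcomp Require Import all_boot.
Set Implicit Arguments. Unset Strict Implicit. Unset Printing Implicit Defensive.

Definition is3graph (T : finType) (E : {set {set T}}) : Prop :=
  forall e, e \in E -> #|e| = 3.

(* f : V(F) -> V(H) is a homomorphism: f(E) \in H for every edge E of F.
   (Since H is 3-uniform, f is then injective on each edge.) *)
Definition hom (T U : finType) (F : {set {set T}}) (H : {set {set U}})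
  (f : T -> U) : Prop := forall e, e \in F -> f @: e \in H.

Definition has_hom (T U : finType) (F : {set {set T}}) (H : {set {set U}}) :=
  exists f : T -> U, hom F H f.

Definition contained (T U : finType) (F : {set {set T}}) (H : {set {set U}}) :=
  exists f : T -> U, injective f /\ hom F H f.

Definition isomorphic (T U : finType) (F : {set {set T}}) (H : {set {set U}}) :=
  exists f : T -> U, bijective f /\ forall e, (e \in F) = (f @: e \in H).

Definition transversal (T : finType) (E : {set {set T}}) (X : {set T}) : bool :=
  [forall e in E, X :&: e != set0].

Definition tau (T : finType) (E : {set {set T}}) : nat :=
  \big[minn/#|T|]_(X : {set T} | transversal E X) #|X|.

Definition induced (T : finType) (E : {set {set T}}) (S : {set T}) :
  {set {set T}} := [set e in E | e \subset S].

Definition is_core (T : finType) (E : {set {set T}}) (S : {set T}) : Prop :=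
  forall x y, x \in S -> y \in S -> x != y ->
    exists2 e, e \in E & (x \in e) && (y \in e).

(* Membership of the 3-graph F = ('I_k, E) in K^3_m  (m = l+1). *)
Definition inK (m k : nat) (E : {set {set 'I_k}}) : Prop :=
  [/\ is3graph E, k <= m + 'C(m, 2) &
      exists S : {set 'I_k}, #|S| = m /\ is_core E S].

(* K_5^{3-}: all triples of [5] except {1,2,3} (vertices 0..4 here). *)
Definition K5minus : {set {set 'I_5}} :=
  [set e : {set 'I_5} | (#|e| == 3) &&
     (e != [set (inord 0 : 'I_5); inord 1; inord 2])].

(* G^1_n : A = first floor(n/3) vertices, B = the rest. *)
Definition G1 (n : nat) : {set {set 'I_n}} :=
  [set e : {set 'I_n} | (#|e| == 3) &&
     (#|e :&: [set i : 'I_n | i < n %/ 3]| == 1)].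

(* G^2_6 (vertices 1..6 renamed 0..5). *)
Definition G26 : {set {set 'I_6}} :=
  [set e : {set 'I_6} | [&& #|e| == 3,
     e != [set (inord 0 : 'I_6); inord 1; inord 2],
     e != [set (inord 0 : 'I_6); inord 1; inord 5],
     e != [set (inord 2 : 'I_6); inord 3; inord 4] &
     e != [set (inord 3 : 'I_6); inord 4; inord 5]]].

(* The blowup of G^2_6 on vertex set 'I_n given by a surjective part map p
   (part i has size t_i = #|p^-1(i)| >= 1). *)
Definition blowup26 (n : nat) (p : 'I_n -> 'I_6) : {set {set 'I_n}} :=
  [set e : {set 'I_n} | (#|e| == 3) && (p @: e \in G26)].

Definition surj (n : nat) (p : 'I_n -> 'I_6) : Prop := forall i, exists x, p x = i.

(* p yields a blowup of G^2_6 on n vertices with maximum number of edges,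
   i.e. one of the 3-graphs G^2_n (for n = 6 this is G^2_6 itself). *)
Definition is_G2 (n : nat) (p : 'I_n -> 'I_6) : Prop :=
  surj p /\ forall q : 'I_n -> 'I_6, surj q -> #|blowup26 q| <= #|blowup26 p|.

Definition inM1 (k : nat) (E : {set {set 'I_k}}) : Prop := isomorphic E K5minus.

Definition inM2 (k : nat) (E : {set {set 'I_k}}) : Prop :=
  [/\ is3graph E, k <= 7 + 'C(7, 2) &
      exists S : {set 'I_k}, [/\ #|S| = 7, is_core E S & 2 <= tau (induced E S)]].

Definition inM3 (k : nat) (E : {set {set 'I_k}}) : Prop :=
  [/\ inK 6 E,
      (forall n, 1 <= n -> ~ contained E (G1 n)) &
      (forall n (p : 'I_n -> 'I_6), 6 <= n -> is_G2 p -> ~ contained E (blowup26 p))].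

Definition inM (k : nat) (E : {set {set 'I_k}}) : Prop :=
  inM1 E \/ inM2 E \/ inM3 E.

Definition M_free (V : finType) (H : {set {set V}}) : Prop :=
  forall k (E : {set {set 'I_k}}), inM E -> ~ contained E H.

Definition M_hom_free (V : finType) (H : {set {set V}}) : Prop :=
  forall k (E : {set {set 'I_k}}), inM E -> ~ has_hom E H.

(* A homomorphism f from a member F of M into a 3-graph H is injective on every edge, hence
   on every core of F.  For F in M1 the whole vertex set is a core, so f is an embedding.  For F
   in M2 or M3 the image f(F) is again in M2 or M3: the core keeps its size and its transversal
   number, and an embedding of f(F) into G^1_n or G^2_n would give a homomorphism of F into it,
   hence an embedding of F into G^1_{3|F|}, resp. into a maximum blowup of G^2_6 on 6000
   vertices, all of whose parts have at least 21 >= |V(F)| vertices.  The last fact comes from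
   the edge polynomial of G^2_6: if a part of a blowup on 6m vertices has at most 20 vertices,
   the edges avoiding it number at most 7/100 of the cube of the remaining vertex count (a
   Lagrangian bound for G^2_6 minus a vertex) and those meeting it at most 20 (6m)^2, fewer in
   total than the 16 m^3 edges of the balanced blowup once m >= 1000. *)

From mathcomp Require Import all_boot all_order ssralg ssrnum ssrint.
From mathcomp Require Import ring lra zify.
Set Implicit Arguments. Unset Strict Implicit. Unset Printing Implicit Defensive.
Import Order.TTheory GRing.Theory Num.Theory.

(** * Homomorphic images of 3-graphs *)

Lemma hom_comp (T U W : finType) (E : {set {set T}}) (F : {set {set U}}) (G : {set {set W}})
    (h : T -> U) (g : U -> W) :
  hom E F h -> hom F G g -> hom E G (g \o h).
Proof. by move=> h_hom g_hom e eE; rewrite imset_comp; apply/g_hom/h_hom. Qed.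

Section InjectiveOnCores.
Variables (T U : finType) (E : {set {set T}}) (f : T -> U).

Lemma hom_inj_on_edges (H : {set {set U}}) :
  is3graph E -> is3graph H -> hom E H f -> forall e, e \in E -> {in e &, injective f}.
Proof. by move=> E3 H3 f_hom e eE; apply/imset_injP; rewrite H3 ?f_hom // E3. Qed.

Lemma inj_on_core S :
  (forall e, e \in E -> {in e &, injective f}) -> is_core E S -> {in S &, injective f}.
Proof.
move=> f_inj S_core x y xS yS fxy; apply/eqP/negPn/negP => xy.
have [e eE /andP [xe ye]] := S_core x y xS yS xy.
by move/eqP: xy; apply; apply: (f_inj e).
Qed.

End InjectiveOnCores.

Lemma tau_ge2P (T : finType) (E : {set {set T}}) :
  2 <= tau E <-> 2 <= #|T| /\ (forall X, transversal E X -> 2 <= #|X|).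
Proof.
rewrite /tau -minEnat.
have minP := bigmin_geP #|T| 2 (fun X => transversal E X) (fun X : {set T} => #|X|).
by split=> /minP.
Qed.

Section ImageGraph.
Variables (T U : finType) (E : {set {set T}}) (h : T -> U).

Definition image_graph : {set {set U}} := [set h @: (e : {set T}) | e in E].

Lemma hom_image_graph : hom E image_graph h.
Proof. by move=> e eE; apply: imset_f. Qed.

Lemma image_graph_contained (V : finType) (H : {set {set V}}) (g : U -> V) :
  injective g -> hom E H (g \o h) -> contained image_graph H.
Proof.
by move=> g_inj gh_hom; exists g; split=> // _ /imsetP [e eE ->]; rewrite -imset_comp gh_hom.
Qed.

Lemma image_graph_core S : is_core E S -> is_core image_graph (h @: S).
Proof.
move=> S_core _ _ /imsetP [x xS ->] /imsetP [y yS ->] hxy.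
have [|e eE /andP [xe ye]] := S_core x y xS yS; first by apply: contraNneq hxy => ->.
by exists (h @: e); rewrite ?imset_f.
Qed.

Hypotheses (E3 : is3graph E) (h_inj : forall e, e \in E -> {in e &, injective h}).

Lemma image_graph_3graph : is3graph image_graph.
Proof. by move=> _ /imsetP [e eE ->]; rewrite (card_in_imset (h_inj eE)) E3. Qed.

(* A transversal X' of the image pulls back to the transversal S :&: h @^-1: X' of E[S],
   which h maps injectively into X'. *)
Lemma image_graph_tau S : is_core E S ->
  2 <= tau (induced E S) -> 2 <= tau (induced image_graph (h @: S)).
Proof.
move=> S_core /tau_ge2P [_ tauS]; have hS_inj := inj_on_core h_inj S_core.
have S_transversal : transversal (induced E S) S.
  apply/forall_inP => e; rewrite inE => /andP [eE eS].
  by rewrite (setIidPr eS) -card_gt0 E3.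
have S2 := tauS S S_transversal.
apply/tau_ge2P; split; first by rewrite (leq_trans S2) // -(card_in_imset hS_inj) max_card.
move=> X' /forall_inP X'_tr.
pose X := S :&: h @^-1: X'.
have X_tr : transversal (induced E S) X.
  apply/forall_inP => e; rewrite inE => /andP [eE eS].
  have /X'_tr : h @: e \in induced image_graph (h @: S) by rewrite inE imset_f ?imsetS.
  case/set0Pn => y /setIP [y_X' /imsetP [x xe y_def]].
  by apply/set0Pn; exists x; rewrite !inE (subsetP eS) // -y_def y_X'.
rewrite (leq_trans (tauS X X_tr)) // -(card_in_imset (sub_in2 _ hS_inj)) => [|x];
  last by case/setIP.
by apply/subset_leq_card/subsetP => y /imsetP [x /setIP [_ x_X'] ->]; rewrite inE in x_X'.
Qed.

End ImageGraph.

Lemma factor_through_ord (A V : finType) (f : A -> V) :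
  exists k (h : A -> 'I_k) (g : 'I_k -> V), [/\ k <= #|A|, injective g & forall x, g (h x) = f x].
Proof.
have f_in x : f x \in f @: A by apply: imset_f.
exists #|f @: A|, (fun x => enum_rank_in (f_in x) (f x)), enum_val; split.
- exact: leq_imset_card.
- exact: enum_val_inj.
- by move=> x; rewrite enum_rankK_in.
Qed.

Lemma card_imset_setI (T U : finType) (g : T -> U) (e : {set T}) (B : {set U}) :
  {in e &, injective g} -> #|g @: e :&: B| = #|e :&: g @^-1: B|.
Proof.
move=> g_inj; rewrite -(card_in_imset (sub_in2 (subsetP (subsetIl e _)) g_inj)).
apply: eq_card => y; apply/setIP/imsetP => [[/imsetP [x xe ->] xB] | [x /setIP [xe]]].
  by exists x; rewrite // !inE xe.
by rewrite inE => gxB ->; rewrite imset_f.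
Qed.

(* Within each fibre of q, the i-th element is sent to the i-th element of the fibre of p. *)
Lemma lift_through_fibres (A B C : finType) (y0 : B) (q : A -> C) (p : B -> C) :
  (forall c, #|q @^-1: [set c]| <= #|p @^-1: [set c]|) ->
  exists2 th : A -> B, injective th & forall x, p (th x) = q x.
Proof.
move=> fibre_le.
pose rank x := index x (enum (q @^-1: [set q x])).
pose th x := nth y0 (enum (p @^-1: [set q x])) (rank x).
have rank_lt x : rank x < #|q @^-1: [set q x]| by rewrite cardE index_mem mem_enum !inE.
have th_fibre x : p (th x) = q x.
  have : th x \in enum (p @^-1: [set q x]).
    by rewrite mem_nth // -cardE (leq_trans (rank_lt x)).
  by rewrite mem_enum !inE => /eqP.
exists th => // x y th_xy.
have qxy : q x = q y by rewrite -!th_fibre th_xy.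
have x_fibre : x \in enum (q @^-1: [set q x]) by rewrite mem_enum !inE.
have y_fibre : y \in enum (q @^-1: [set q x]) by rewrite mem_enum !inE qxy.
move: th_xy; rewrite /th /rank -qxy => /eqP.
rewrite nth_uniq ?enum_uniq -?cardE ?(leq_trans _ (fibre_le (q x))) ?cardE ?index_mem //.
by move=> /eqP rank_xy; rewrite -(nth_index x x_fibre) rank_xy nth_index.
Qed.

Lemma card_set3 (T : finType) (a b c : T) : (#|[set a; b; c]| == 3) = uniq [:: a; b; c].
Proof.
have -> : [set a; b; c] = [set x in [:: a; b; c]] by apply/setP => x; rewrite !inE orbA.
by rewrite cardsE; apply/eqP/card_uniqP.
Qed.

Lemma eq_set3 (T : finType) (a b c x y z : T) : uniq [:: a; b; c] -> uniq [:: x; y; z] ->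
  ([set a; b; c] == [set x; y; z]) = all (mem [:: x; y; z]) [:: a; b; c].
Proof.
move=> abc xyz; rewrite eqEcard.
move: (card_set3 a b c) (card_set3 x y z); rewrite abc xyz => /eqP -> /eqP ->.
by rewrite leqnn andbT !subUset !sub1set /= !inE !orbA andbT andbA.
Qed.

(** * Copies of K5minus and of subgraphs of G1 *)

(* Of two triples {a, b, c} and {a, b, d}, at most one is the missing edge. *)
Lemma K5minus_core : is_core K5minus setT.
Proof.
move=> a b _ _ ab.
have : 1 < #|~: [set a; b]| by rewrite cardsCs setCK cards2 ab card_ord.
case/card_gt1P => c [d [c_ab d_ab cd]].
have inK5 x : x \in ~: [set a; b] ->
    ([set a; b; x] \in K5minus) = ([set a; b; x] != [set inord 0; inord 1; inord 2]).
  rewrite !inE negb_or card_set3 /= !inE negb_or ab andbT => /andP [xa xb].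
  by rewrite eq_sym xa eq_sym xb.
have ab_in x : (a \in [set a; b; x]) && (b \in [set a; b; x]) by rewrite !inE !eqxx orbT.
case: (eqVneq [set a; b; c] [set inord 0; inord 1; inord 2]) => [abc | abc].
  exists [set a; b; d] => //; rewrite inK5 // -abc.
  apply/negP => /eqP abd; move: d_ab; rewrite !inE negb_or => /andP [da db].
  have : d \in [set a; b; c] by rewrite -abd !inE eqxx orbT.
  by rewrite !inE (negbTE da) (negbTE db) eq_sym (negbTE cd).
by exists [set a; b; c]; rewrite ?inK5.
Qed.

Lemma inM1_3graph_core k (E : {set {set 'I_k}}) : inM1 E -> is3graph E /\ is_core E setT.
Proof.
move=> [phi [[psi phiK psiK] E_K5]].
have phi_inj : injective phi := can_inj phiK.
split=> [e | x y _ _ xy].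
  by rewrite E_K5 inE card_imset // => /andP [/eqP].
have phixy : phi x != phi y by rewrite (inj_eq phi_inj).
have [T TK /andP [xT yT]] := K5minus_core (in_setT (phi x)) (in_setT (phi y)) phixy.
exists (psi @: T); first by rewrite E_K5 -imset_comp (eq_imset _ psiK) imset_id.
by rewrite -(phiK x) -(phiK y) !imset_f.
Qed.

Lemma inM1_hom_injective k (E : {set {set 'I_k}}) (V : finType) (H : {set {set V}}) f :
  is3graph H -> inM1 E -> hom E H f -> injective f.
Proof.
move=> H3 /inM1_3graph_core [E3 E_core] f_hom x y.
by apply: (inj_on_core (hom_inj_on_edges E3 H3 f_hom) E_core); rewrite inE.
Qed.

(* Vertices mapped into the class A of G1 n go to the first third. *)
Lemma G1_contained_of_hom k (E : {set {set 'I_k}}) n (f : 'I_k -> 'I_n) :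
  is3graph E -> hom E (G1 n) f -> contained E (G1 (3 * k)).
Proof.
move=> E3 f_hom.
have low (x : 'I_k) : x < 3 * k by have := ltn_ord x; lia.
have high (x : 'I_k) : k + x < 3 * k by have := ltn_ord x; lia.
pose th x : 'I_(3 * k) := if f x < n %/ 3 then Ordinal (low x) else Ordinal (high x).
have thA x : (th x < 3 * k %/ 3) = (f x < n %/ 3).
  by rewrite mulKn // /th; case: ifP => /= _; [exact: ltn_ord | rewrite ltnNge leq_addr].
have th_inj : injective th.
  move=> x y; rewrite /th; have := ltn_ord x; have := ltn_ord y.
  by case: ifP => _; case: ifP => _ /= ? ? /(congr1 val) /= ?; apply: val_inj => /=; lia.
exists th; split=> // e eE.
have := f_hom e eE; rewrite !inE => /andP [/eqP fe3 fe1].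
have f_inj : {in e &, injective f} by apply/imset_injP; rewrite fe3 E3.
rewrite card_imset_setI // in fe1.
rewrite card_imset // E3 //= card_imset_setI => [|x y _ _ /th_inj //].
have -> : #|e :&: th @^-1: [set i : 'I_(3 * k) | i < 3 * k %/ 3]|
          = #|e :&: f @^-1: [set i : 'I_n | i < n %/ 3]|.
  by apply: eq_card => x; rewrite !inE thA.
exact: fe1.
Qed.

(** * The edge polynomial of G26 *)

Section Lagrangians.
Variable R : realDomainType.
Local Open Scope ring_scope.
Implicit Types a b c r u v x y z : R.

Lemma amgm3 r u : 0 <= r -> 0 <= u -> 27 * r ^+ 2 * u <= 4 * (r + u) ^+ 3.
Proof.
move=> r0 u0; have := mulr_ge0 (sqr_ge0 (r - 2 * u)) (addr_ge0 (mulr_ge0 (ler0n _ 4) r0) u0).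
nra.
Qed.

(* bc <= w^2/4, xy <= s^2/4 and ws <= v^2/4 (w = b + c, s = x + y, v = w + s)
   give 8P <= 3av^2 + 2w^2s; AM-GM bounds w^2s, leaving an inequality in a and v. *)
Lemma lagrangian_K5_less_two_edges_at_pair a b c x y :
  0 <= a -> 0 <= b -> 0 <= c -> 0 <= x -> 0 <= y ->
  100 * (a * b * c + (a * b + a * c + b * c) * (x + y) + a * x * y)
    <= 7 * (a + b + c + x + y) ^+ 3.
Proof.
move=> a0 b0 c0 x0 y0.
have w0 : 0 <= b + c by rewrite addr_ge0.
have s0 : 0 <= x + y by rewrite addr_ge0.
have v0 : 0 <= b + c + (x + y) by rewrite addr_ge0.
have := mulr_ge0 a0 (sqr_ge0 (b - c)).
have := mulr_ge0 s0 (sqr_ge0 (b - c)).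
have := mulr_ge0 a0 (sqr_ge0 (x - y)).
have := mulr_ge0 a0 (sqr_ge0 (b + c - (x + y))).
have := amgm3 w0 s0.
have one_var : 8100 * a * (b + c + (x + y)) ^+ 2 + 800 * (b + c + (x + y)) ^+ 3
               <= 1512 * (a + (b + c + (x + y))) ^+ 3.
  have := mulr_ge0 v0 (sqr_ge0 (28 * a - 11 * (b + c + (x + y)))).
  have := mulr_ge0 v0 (sqr_ge0 (b + c + (x + y))).
  have := mulr_ge0 (mulr_ge0 a0 a0) a0.
  nra.
lra.
Qed.

(* ab <= u^2/4, xy <= s^2/4 and us <= w^2/4 (u = a + b, s = x + y, w = u + s)
   give 16P <= w^3 + 4zw^2, leaving an inequality in z and w. *)
Lemma lagrangian_K5_less_two_edges_at_vertex a b x y z :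
  0 <= a -> 0 <= b -> 0 <= x -> 0 <= y -> 0 <= z ->
  100 * (a * b * (x + y) + x * y * (a + b) + z * (a + b) * (x + y))
    <= 7 * (a + b + x + y + z) ^+ 3.
Proof.
move=> a0 b0 x0 y0 z0.
have u0 : 0 <= a + b by rewrite addr_ge0.
have s0 : 0 <= x + y by rewrite addr_ge0.
have w0 : 0 <= a + b + (x + y) by rewrite addr_ge0.
have := mulr_ge0 s0 (sqr_ge0 (a - b)).
have := mulr_ge0 u0 (sqr_ge0 (x - y)).
have := mulr_ge0 w0 (sqr_ge0 (a + b - (x + y))).
have := mulr_ge0 z0 (sqr_ge0 (a + b - (x + y))).
have one_var : 100 * (a + b + (x + y)) ^+ 3 + 400 * z * (a + b + (x + y)) ^+ 2
               <= 112 * (z + (a + b + (x + y))) ^+ 3.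
  have := mulr_ge0 w0 (sqr_ge0 (3 * (a + b + (x + y)) - 8 * z)).
  have := mulr_ge0 w0 (sqr_ge0 z).
  have := mulr_ge0 (mulr_ge0 z0 z0) z0.
  nra.
lra.
Qed.

(* The sum of t_a t_b t_c over the edges {a, b, c} of G26. *)
Definition G26_poly (t0 t1 t2 t3 t4 t5 : R) : R :=
  t0 * t1 * t3 + t0 * t1 * t4 + t0 * t2 * t3 + t0 * t2 * t4 + t0 * t2 * t5
  + t0 * t3 * t4 + t0 * t3 * t5 + t0 * t4 * t5 + t1 * t2 * t3 + t1 * t2 * t4
  + t1 * t2 * t5 + t1 * t3 * t4 + t1 * t3 * t5 + t1 * t4 * t5 + t2 * t3 * t5
  + t2 * t4 * t5.

(* P counts the edges missing a part of size t, t * L those meeting it; the other parts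
   have T vertices in all, and S = 6m is the total. *)
Lemma small_part_split_lt (P L t T S m : R) :
  0 <= t <= 20 -> 0 <= L <= S ^+ 2 -> 0 <= T <= S -> 100 * P <= 7 * T ^+ 3 ->
  S = 6 * m -> 1000 <= m -> P + t * L < 16 * m ^+ 3.
Proof.
move=> /andP [t_ge0 t_le20] /andP [L_ge0 L_le] /andP [T_ge0 T_le] P_le S_def m_ge1000.
have T3_le : T ^+ 3 <= S ^+ 3 by rewrite lerXn2r // nnegrE (le_trans T_ge0).
have tL_le : t * L <= 20 * S ^+ 2.
  by rewrite (le_trans (ler_wpM2l t_ge0 L_le)) // ler_wpM2r ?sqr_ge0.
have m3_ge : 1000 * m ^+ 2 <= m ^+ 3 by have := sqr_ge0 m; nra.
rewrite S_def in T3_le tL_le; nra.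
Qed.

Lemma G26_poly_lt_part0 t0 t1 t2 t3 t4 t5 m :
  0 <= t0 -> 0 <= t1 -> 0 <= t2 -> 0 <= t3 -> 0 <= t4 -> 0 <= t5 ->
  t0 + t1 + t2 + t3 + t4 + t5 = 6 * m -> 1000 <= m ->
  t0 <= 20 -> G26_poly t0 t1 t2 t3 t4 t5 < 16 * m ^+ 3.
Proof.
move=> h0 h1 h2 h3 h4 h5 sum_t m1000 t0_le.
set L := t1 * t3 + t1 * t4 + t2 * t3 + t2 * t4 + t2 * t5 + t3 * t4 + t3 * t5 + t4 * t5.
have -> : G26_poly t0 t1 t2 t3 t4 t5 = t1 * t2 * t5 + (t1 * t2 + t1 * t5 + t2 * t5) * (t3 + t4)
                                      + t1 * t3 * t4 + t0 * L.
  by rewrite /G26_poly /L; ring.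
apply: (small_part_split_lt (T := t1 + t2 + t5 + t3 + t4) (S := t0 + t1 + t2 + t3 + t4 + t5)) => //.
- by rewrite h0.
- by rewrite /L; apply/andP; split; nra.
- by apply/andP; split; lra.
- exact: lagrangian_K5_less_two_edges_at_pair.
Qed.

Lemma G26_poly_lt_part2 t0 t1 t2 t3 t4 t5 m :
  0 <= t0 -> 0 <= t1 -> 0 <= t2 -> 0 <= t3 -> 0 <= t4 -> 0 <= t5 ->
  t0 + t1 + t2 + t3 + t4 + t5 = 6 * m -> 1000 <= m ->
  t2 <= 20 -> G26_poly t0 t1 t2 t3 t4 t5 < 16 * m ^+ 3.
Proof.
move=> h0 h1 h2 h3 h4 h5 sum_t m1000 t2_le.
set L := t0 * t3 + t0 * t4 + t0 * t5 + t1 * t3 + t1 * t4 + t1 * t5 + t3 * t5 + t4 * t5.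
have -> : G26_poly t0 t1 t2 t3 t4 t5 = t0 * t1 * (t3 + t4) + t3 * t4 * (t0 + t1)
                                      + t5 * (t0 + t1) * (t3 + t4) + t2 * L.
  by rewrite /G26_poly /L; ring.
apply: (small_part_split_lt (T := t0 + t1 + t3 + t4 + t5) (S := t0 + t1 + t2 + t3 + t4 + t5)) => //.
- by rewrite h2.
- by rewrite /L; apply/andP; split; nra.
- by apply/andP; split; lra.
- exact: lagrangian_K5_less_two_edges_at_vertex.
Qed.

(* The automorphisms of G26 swap 0 and 1, 3 and 4, 2 and 5, or {0,1} and {3,4}. *)
Lemma G26_poly_small_part_lt t0 t1 t2 t3 t4 t5 m :
  0 <= t0 -> 0 <= t1 -> 0 <= t2 -> 0 <= t3 -> 0 <= t4 -> 0 <= t5 ->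
  t0 + t1 + t2 + t3 + t4 + t5 = 6 * m -> 1000 <= m ->
  [|| t0 <= 20, t1 <= 20, t2 <= 20, t3 <= 20, t4 <= 20 | t5 <= 20] ->
  G26_poly t0 t1 t2 t3 t4 t5 < 16 * m ^+ 3.
Proof.
move=> h0 h1 h2 h3 h4 h5 sum_t m1000.
have swap01 : G26_poly t0 t1 t2 t3 t4 t5 = G26_poly t1 t0 t2 t3 t4 t5.
  by rewrite /G26_poly; ring.
have swap25 : G26_poly t0 t1 t2 t3 t4 t5 = G26_poly t0 t1 t5 t3 t4 t2.
  by rewrite /G26_poly; ring.
have swap_pairs : G26_poly t0 t1 t2 t3 t4 t5 = G26_poly t3 t4 t2 t0 t1 t5.
  by rewrite /G26_poly; ring.
have swap_pairs' : G26_poly t0 t1 t2 t3 t4 t5 = G26_poly t4 t3 t2 t0 t1 t5.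
  by rewrite /G26_poly; ring.
case/or4P => [t_le | t_le | t_le | /or3P [t_le | t_le | t_le]].
- exact: G26_poly_lt_part0.
- by rewrite swap01; apply: G26_poly_lt_part0 => //; lra.
- exact: G26_poly_lt_part2.
- by rewrite swap_pairs; apply: G26_poly_lt_part0 => //; lra.
- by rewrite swap_pairs'; apply: G26_poly_lt_part0 => //; lra.
- by rewrite swap25; apply: G26_poly_lt_part2 => //; lra.
Qed.

End Lagrangians.

Lemma sum_over_fibres (T U : finType) (p : T -> U) (F : U -> nat) :
  \sum_(x : T) F (p x) = \sum_(a : U) #|p @^-1: [set a]| * F a.
Proof.
rewrite (partition_big p xpredT) //=; apply: eq_bigr => a _.
rewrite (eq_bigr (fun _ => F a)) => [|x /eqP -> //].
by rewrite sum_nat_const; congr (_ * _); apply: eq_card => x; rewrite !inE.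
Qed.

Lemma sum_card_fibres (T U : finType) (p : T -> U) : \sum_(a : U) #|p @^-1: [set a]| = #|T|.
Proof.
by rewrite -sum1_card (sum_over_fibres p (fun=> 1)); apply: eq_bigr => a _; rewrite muln1.
Qed.

Lemma card_ffun3_onto (T : finType) (e : {set T}) :
  #|e| = 3 -> #|[set f : {ffun 'I_3 -> T} | f @: setT == e]| = 6.
Proof.
move=> e3.
have -> : [set f : {ffun 'I_3 -> T} | f @: setT == e] =
          [set f : {ffun 'I_3 -> T} in ffun_on (mem e) | injectiveb f].
  apply/setP => f; rewrite !inE; apply/eqP/andP => [fe | [/ffun_onP f_e /injectiveP f_inj]].
    split; first by apply/ffun_onP => x; rewrite -fe imset_f ?inE.
    have /imset_injP f_inj : #|f @: setT| == #|[set: 'I_3]| by rewrite fe e3 cardsT card_ord.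
    by apply/injectiveP => x y; apply: f_inj; rewrite inE.
  apply/eqP; rewrite eqEcard card_imset // cardsT card_ord e3 leqnn andbT.
  by apply/subsetP => _ /imsetP [x _ ->].
by rewrite card_inj_ffuns_on card_ord -[#|mem e|]/#|e| e3.
Qed.

Lemma sum_ffun3 (T : finType) (F : T -> T -> T -> nat) :
  \sum_(f : {ffun 'I_3 -> T}) F (f ord0) (f (inord 1)) (f (inord 2)) =
  \sum_x \sum_y \sum_z F x y z.
Proof.
rewrite [RHS](eq_bigr (fun x => \sum_(u : T * T) F x u.1 u.2)) => [|x _]; last by rewrite pair_big.
rewrite pair_big /=.
pose tr (u : T * (T * T)) : {ffun 'I_3 -> T} := [ffun i : 'I_3 => nth u.1 [:: u.1; u.2.1; u.2.2] i].
rewrite (reindex tr) => [|/=]; first by apply: eq_bigr => -[x [y z]] _; rewrite !ffunE /= !inordK.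
exists (fun f => (f ord0, (f (inord 1), f (inord 2)))) => [[x [y z]] _ | f _].
  by rewrite !ffunE /= !inordK.
apply/ffunP => -[[|[|[|//]]] i3]; rewrite ffunE /=; congr (f _).
all: by apply: val_inj; rewrite /= ?inordK.
Qed.

Lemma imset_ord3 (T : finType) (f : 'I_3 -> T) :
  f @: setT = [set f ord0; f (inord 1); f (inord 2)].
Proof.
apply/setP => y; rewrite !inE; apply/imsetP/idP => [[[[|[|[|//]]] i3] _ ->] | ].
- by rewrite (_ : Ordinal i3 = ord0) ?eqxx //; apply: val_inj.
- by rewrite (_ : Ordinal i3 = inord 1) ?eqxx ?orbT //; apply: val_inj; rewrite /= inordK.
- by rewrite (_ : Ordinal i3 = inord 2) ?eqxx ?orbT //; apply: val_inj; rewrite /= inordK.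
by move=> /orP [/orP [] | ] /eqP ->; eexists.
Qed.

Section BlowupCount.
Variables (T U : finType) (G : {set {set U}}) (p : T -> U).
Hypothesis G3 : is3graph G.

Lemma card_blowup_ffun :
  6 * #|[set e : {set T} | (#|e| == 3) && (p @: e \in G)]|
  = #|[set f : {ffun 'I_3 -> T} | p @: (f @: setT) \in G]|.
Proof.
rewrite -[in RHS]sum1_card (partition_big (fun f : {ffun 'I_3 -> T} => f @: setT)
          (fun e => e \in [set e : {set T} | (#|e| == 3) && (p @: e \in G)])) /=.
  rewrite (eq_bigr (fun=> 6)) => [|e]; first by rewrite sum_nat_const mulnC.
  rewrite inE => /andP [/eqP e3 pe].
  rewrite -(card_ffun3_onto e3) -sum1_card; apply: eq_bigl => f; rewrite !inE.
  by apply/andP/idP => [[] // | /eqP fe]; rewrite fe pe.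
move=> f; rewrite !inE => pfG; rewrite pfG andbT eqn_leq.
have := leq_imset_card f setT; have := leq_imset_card p (f @: setT).
by rewrite cardsT card_ord (G3 pfG) => -> ->.
Qed.

Lemma card_blowup_sum :
  6 * #|[set e : {set T} | (#|e| == 3) && (p @: e \in G)]|
  = \sum_(a : U) \sum_(b : U) \sum_(c : U)
      #|p @^-1: [set a]| * #|p @^-1: [set b]| * #|p @^-1: [set c]| * ([set a; b; c] \in G).
Proof.
pose inG x y z := nat_of_bool ([set x; y; z] \in G).
rewrite card_blowup_ffun -sum1_card big_mkcond /=.
rewrite (eq_bigr (fun f : {ffun 'I_3 -> T} =>
                   inG (p (f ord0)) (p (f (inord 1))) (p (f (inord 2)))));
  last by move=> f _; rewrite inE imset_ord3 !imsetU !imset_set1 /inG; case: ifP.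
rewrite (sum_ffun3 (fun x y z => inG (p x) (p y) (p z))).
rewrite (sum_over_fibres p (fun a => \sum_y \sum_z inG a (p y) (p z))); apply: eq_bigr => a _.
rewrite (sum_over_fibres p (fun b => \sum_z inG a b (p z))) big_distrr; apply: eq_bigr => b _.
rewrite (sum_over_fibres p (fun c => inG a b c)) !big_distrr; apply: eq_bigr => c _.
by rewrite /= !mulnA.
Qed.

End BlowupCount.

Definition G26_triple (a b c : nat) : bool :=
  let inside T := all (mem T) [:: a; b; c] in
  [&& uniq [:: a; b; c], ~~ inside [:: 0; 1; 2], ~~ inside [:: 0; 1; 5],
      ~~ inside [:: 2; 3; 4] & ~~ inside [:: 3; 4; 5]].

Lemma G26_tripleE (a b c : 'I_6) : ([set a; b; c] \in G26) = G26_triple a b c.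
Proof.
have inordE (i j k : nat) (d : 'I_6) : i < 6 -> j < 6 -> k < 6 ->
    (d \in [:: inord i; inord j; inord k]) = (val d \in [:: i; j; k]).
  by move=> *; rewrite !inE -!val_eqE /= !inordK.
have uniq_inord (i j k : nat) : i < 6 -> j < 6 -> k < 6 -> uniq [:: i; j; k] ->
    uniq [:: inord i; inord j; inord k : 'I_6].
  by move=> *; rewrite -(map_inj_uniq val_inj) /= !inordK.
rewrite inE card_set3 /G26_triple.
have -> : uniq [:: val a; val b; val c] = uniq [:: a; b; c] by rewrite -(map_inj_uniq val_inj).
case abc: (uniq [:: a; b; c]) => //.
by rewrite !eq_set3 ?uniq_inord //= !inordE.
Qed.

Lemma G26_3graph : is3graph G26.
Proof. by move=> e; rewrite inE => /and5P [/eqP]. Qed.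

Lemma big_ord6 (F : 'I_6 -> nat) :
  \sum_(i : 'I_6) F i
  = F (inord 0) + F (inord 1) + F (inord 2) + F (inord 3) + F (inord 4) + F (inord 5).
Proof.
rewrite !big_ord_recl big_ord0 addn0 !addnA.
by congr (_ + _ + _ + _ + _ + _); congr F; apply/val_inj; rewrite /= inordK.
Qed.

Lemma sum_G26_triples (w : 'I_6 -> nat) :
  ((\sum_(a : 'I_6) \sum_(b : 'I_6) \sum_(c : 'I_6) w a * w b * w c * ([set a; b; c] \in G26))%:Z
  = 6 * G26_poly (w (inord 0))%:Z (w (inord 1))%:Z (w (inord 2))%:Z
                 (w (inord 3))%:Z (w (inord 4))%:Z (w (inord 5))%:Z)%R.
Proof.
under eq_bigr do under eq_bigr do under eq_bigr do rewrite G26_tripleE.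
rewrite !big_ord6 !inordK //= /G26_poly.
move: (w (inord 0)) (w (inord 1)) (w (inord 2)) (w (inord 3)) (w (inord 4)) (w (inord 5)).
move=> t0 t1 t2 t3 t4 t5; lia.
Qed.


Lemma card_blowup26 n (p : 'I_n -> 'I_6) :
  (#|blowup26 p|%:Z = G26_poly #|p @^-1: [set inord 0]|%:Z #|p @^-1: [set inord 1]|%:Z
    #|p @^-1: [set inord 2]|%:Z #|p @^-1: [set inord 3]|%:Z #|p @^-1: [set inord 4]|%:Z
    #|p @^-1: [set inord 5]|%:Z)%R.
Proof.
have count := card_blowup_sum p G26_3graph.
have := sum_G26_triples (fun a => #|p @^-1: [set a]|); cbv beta.
by rewrite -count PoszM => six_card; exact: mulfI six_card.
Qed.

(** * Maximum blowups of G26 *)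

Definition balanced (m : nat) : 'I_(6 * m) -> 'I_6 := fun x => inord (x %/ m).
Arguments balanced : clear implicits.

Lemma card_balanced_part m (a : 'I_6) : 0 < m -> #|balanced m @^-1: [set a]| = m.
Proof.
move=> m_gt0.
have lt_6m (j : 'I_m) : a * m + j < 6 * m by have := ltn_ord a; have := ltn_ord j; nia.
rewrite -[RHS](card_ord m) -(card_imset _ (f := fun j => Ordinal (lt_6m j)));
  last by move=> i j /(congr1 val) /= /addnI; apply: val_inj.
apply: eq_card => x; rewrite !inE; apply/eqP/imsetP => [xa | [j _ ->]].
  have xm : x %/ m = a by rewrite -xa /balanced inordK // ltn_divLR // mulnC.
  exists (Ordinal (ltn_pmod x m_gt0)) => //; apply: val_inj => /=; rewrite {1}(divn_eq x m) xm; lia.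
by apply: val_inj; rewrite /balanced /= divnMDl // divn_small // addn0 inordK.
Qed.

Lemma balanced_surj m : 0 < m -> surj (balanced m).
Proof.
move=> m_gt0 a; have : 0 < #|balanced m @^-1: [set a]| by rewrite card_balanced_part.
by case/card_gt0P => x; rewrite !inE => /eqP; exists x.
Qed.

Lemma blowup26_ext n (p q : 'I_n -> 'I_6) : p =1 q -> blowup26 p = blowup26 q.
Proof. by move=> pq; apply/setP => e; rewrite !inE (eq_imset _ pq). Qed.

Lemma exists_G2 m : 0 < m -> exists p : 'I_(6 * m) -> 'I_6, is_G2 p.
Proof.
move=> m_gt0.
pose onto (g : {ffun 'I_(6 * m) -> 'I_6}) := [forall a, exists x, g x == a].
have surjP (g : {ffun 'I_(6 * m) -> 'I_6}) : reflect (surj g) (onto g).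
  apply: (iffP forallP) => [g_onto a | g_surj a].
    by have /existsP [x /eqP] := g_onto a; exists x.
  by have [x gx] := g_surj a; apply/existsP; exists x; rewrite gx.
have onto_bal : onto (finfun (balanced m)).
  by apply/surjP => a; case: (balanced_surj m_gt0 a) => x xa; exists x; rewrite ffunE.
have [g /surjP g_surj g_max] :=
  arg_maxnP (fun g : {ffun 'I_(6 * m) -> 'I_6} => #|blowup26 g|) onto_bal.
exists g; split=> // q q_surj.
rewrite (@blowup26_ext _ q (finfun q)) => [|x]; last by rewrite ffunE.
by apply: g_max; apply/surjP => a; case: (q_surj a) => x qx; exists x; rewrite ffunE.
Qed.

Lemma ord6_cases (P : nat -> bool) (a : 'I_6) :
  P a -> [|| P 0, P 1, P 2, P 3, P 4 | P 5].
Proof. by case: a => -[|[|[|[|[|[|//]]]]]] ? /= ->; rewrite ?orbT. Qed.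

Lemma G2_parts_large m (p : 'I_(6 * m) -> 'I_6) :
  1000 <= m -> is_G2 p -> forall a, 21 <= #|p @^-1: [set a]|.
Proof.
move=> m_ge1000 [_ p_max] a; rewrite leqNgt; apply/negP => small_a.
have m_gt0 : 0 < m by lia.
have bal_le := p_max _ (balanced_surj m_gt0).
have bal_card : (#|blowup26 (balanced m)|%:Z = 16 * m%:Z ^+ 3)%R.
  by rewrite card_blowup26 !card_balanced_part // /G26_poly; ring.
have parts := sum_card_fibres p; rewrite big_ord6 card_ord in parts.
have small : [|| #|p @^-1: [set inord 0]| <= 20, #|p @^-1: [set inord 1]| <= 20,
    #|p @^-1: [set inord 2]| <= 20, #|p @^-1: [set inord 3]| <= 20,
    #|p @^-1: [set inord 4]| <= 20 | #|p @^-1: [set inord 5]| <= 20].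
  apply: (ord6_cases (P := fun i => #|p @^-1: [set inord i]| <= 20) (a := a)).
  by rewrite inord_val; lia.
have : (#|blowup26 p|%:Z < 16 * m%:Z ^+ 3)%R.
  rewrite card_blowup26; apply: G26_poly_small_part_lt => //; first by rewrite -!PoszD parts PoszM.
lia.
Qed.

Lemma hom_blowup26 (T : finType) (E : {set {set T}}) n (p : 'I_n -> 'I_6) (f : T -> 'I_n) :
  hom E (blowup26 p) f -> hom E G26 (p \o f).
Proof.
move=> f_hom e eE; rewrite imset_comp.
by have := f_hom e eE; rewrite in_set => /andP [].
Qed.

Lemma blowup26_contained k (E : {set {set 'I_k}}) n (q : 'I_k -> 'I_6) (p : 'I_n -> 'I_6) :
  is3graph E -> surj p -> hom E G26 q -> (forall a, k <= #|p @^-1: [set a]|) ->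
  contained E (blowup26 p).
Proof.
move=> E3 p_surj q_hom parts_large.
have [y0 _] := p_surj ord0.
have [th th_inj th_fibre] : exists2 th : 'I_k -> 'I_n, injective th & forall x, p (th x) = q x.
  apply: (lift_through_fibres y0) => c; apply: leq_trans (parts_large c).
  by rewrite (leq_trans (max_card _)) ?card_ord.
exists th; split=> // e eE.
by rewrite inE card_imset // E3 //= -imset_comp (eq_imset _ th_fibre) q_hom.
Qed.

Lemma exists_G2_large_parts :
  exists p : 'I_(6 * 1000) -> 'I_6, is_G2 p /\ forall a, 21 <= #|p @^-1: [set a]|.
Proof.
have [p p_G2] := exists_G2 (isT : 0 < 1000).
by exists p; split=> //; apply: G2_parts_large.
Qed.

(** * Images of members of M *)

Section ImageOfMembers.
Variables (k k' : nat) (E : {set {set 'I_k}}) (h : 'I_k -> 'I_k').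
Hypotheses (k'_le_k : k' <= k) (h_inj : forall e, e \in E -> {in e &, injective h}).

Lemma inK_image_graph m : inK m E -> inK m (image_graph E h).
Proof.
move=> [E3 k_le [S [S_card S_core]]]; split.
- exact: image_graph_3graph.
- exact: leq_trans k'_le_k k_le.
- exists (h @: S); split; last exact: image_graph_core.
  by rewrite (card_in_imset (inj_on_core h_inj S_core)).
Qed.

Lemma inM2_image_graph : inM2 E -> inM2 (image_graph E h).
Proof.
move=> [E3 k_le [S [S_card S_core S_tau]]]; split.
- exact: image_graph_3graph.
- exact: leq_trans k'_le_k k_le.
- exists (h @: S); split; [|exact: image_graph_core | exact: image_graph_tau].
  by rewrite (card_in_imset (inj_on_core h_inj S_core)).
Qed.

(* A homomorphic image of E in a blowup of G26 yields a copy of E in a G2 with parts >= 21 >= k. *)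
Lemma inM3_image_graph : inM3 E -> inM3 (image_graph E h).
Proof.
move=> [E_K6 E_G1 E_G2]; have [E3 k_le [S [S_card _]]] := E_K6.
have k_pos : 0 < k by rewrite -[k]card_ord (leq_trans _ (max_card S)) ?S_card.
split; first exact: inK_image_graph.
- move=> n _ [phi [_ phi_hom]]; apply: (E_G1 (3 * k)); first by lia.
  exact: G1_contained_of_hom E3 (hom_comp (@hom_image_graph _ _ E h) phi_hom).
- move=> n p _ _ [phi [_ phi_hom]].
  have [ps [ps_G2 ps_large]] := exists_G2_large_parts.
  apply: (E_G2 _ ps _ ps_G2); first by lia.
  apply: blowup26_contained (fun a => leq_trans k_le (ps_large a)) => //; first by case: ps_G2.
  exact: hom_blowup26 (hom_comp (@hom_image_graph _ _ E h) phi_hom).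
Qed.

End ImageOfMembers.

Theorem lemma3p2 (V : finType) (H : {set {set V}}) :
  is3graph H -> (M_free H <-> M_hom_free H).
Proof.
move=> H3; split=> [H_free k E E_M [f f_hom] | H_hom_free k E E_M [f [_ f_hom]]]; last first.
  by apply: H_hom_free E_M _; exists f.
have E3 : is3graph E by case: E_M => [/inM1_3graph_core [] | [[] | [[]]]].
case: E_M => [E_M1 | E_M23].
  apply: (H_free k E (or_introl E_M1)); exists f; split=> //.
  exact: inM1_hom_injective E_M1 f_hom.
have [k' [h [g [k'_le g_inj gh]]]] := factor_through_ord f; rewrite card_ord in k'_le.
have h_inj e : e \in E -> {in e &, injective h}.
  move=> eE x y xe ye hxy; apply: (hom_inj_on_edges E3 H3 f_hom eE) => //.
  by rewrite -!gh hxy.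
apply: (H_free k' (image_graph E h)).
  case: E_M23 => [E_M2 | E_M3]; [right; left | right; right].
  - exact: inM2_image_graph E_M2.
  - exact: inM3_image_graph E_M3.
by apply: image_graph_contained g_inj _ => e /f_hom; rewrite (eq_imset _ gh).
Qed.
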